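(* Suppose that for every unit vector $\theta\in\Theta$, the random variable $x_0^\top\theta$ with $x_0\sim\mathcal D_0^X$ has a density bounded above by $\phi_u$. Then for all $\beta,\beta'>0$ and $\theta\in\Theta$, $\mathrm{TV}(\mathcal D_\beta(\theta),\mathcal D_{\beta'}(\theta))\le\phi_u|\beta-\beta'|$; i.e. the atlas is $\epsilon_{\mathrm{TV}}$-smooth with $\epsilon_{\mathrm{TV}}\le\phi_u$.
   Context: Binary strategic classification: $\Theta\subseteq\{\theta\in\mathbb R^{d}:\|\theta\|=1\}$, a threshold $T\in\mathbb R$, classifiers $f_\theta(x)=\mathbf 1\{\theta^\top x\ge T\}$. For budget $\beta>0$, an individual with features $x_0$ responds with $g_\beta(x_0,\theta)=x_0+\theta(T-x_0^\top\theta)$ if $x_0^\top\theta\in[T-\beta,T)$ and $g_\beta(x_0,\theta)=x_0$ otherwise. Given a base distribution $\mathcal D_0$ of $(x_0,y)$ with feature marginal $\mathcal D_0^X$, $(x,y)\sim\mathcal D_\beta(\theta)$ iff $(x_0,y)\sim\mathcal D_0$ and $x=g_\beta(x_0,\theta)$. $\mathrm{TV}(P,Q)=\sup_A|P(A)-Q(A)|$. *)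

From HB Require Import structures.
From mathcomp Require Import all_boot all_order all_algebra.
From mathcomp Require Import all_classical all_reals all_analysis.
Set Implicit Arguments. Unset Strict Implicit. Unset Printing Implicit Defensive.
Import Order.TTheory GRing.Theory Num.Theory.
Local Open Scope classical_set_scope.
Local Open Scope ring_scope.

(* Features live in R^d, represented as d.-tuple R, equipped with the
   library's product (Borel) sigma-algebra on tuples; labels are bool
   (discrete sigma-algebra); (x, y) pairs carry the product sigma-algebra. *)

Definition dotp (R : realType) (d : nat) (x y : d.-tuple R) : R :=
  \sum_(i < d) tnth x i * tnth y i.

Definition unit_vec (R : realType) (d : nat) (t : d.-tuple R) : Prop :=
  dotp t t = 1.

Definition add_scaled (R : realType) (d : nat) (x0 : d.-tuple R) (c : R)
    (t : d.-tuple R) : d.-tuple R :=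
  [tuple tnth x0 i + c * tnth t i | i < d].

Definition gresp (R : realType) (d : nat) (T beta : R)
    (x0 t : d.-tuple R) : d.-tuple R :=
  if (T - beta <= dotp x0 t) && (dotp x0 t < T)
  then add_scaled x0 (T - dotp x0 t) t
  else x0.

Definition Dbeta (R : realType) (d : nat)
    (D0 : set (d.-tuple R * bool) -> \bar R) (T beta : R) (t : d.-tuple R)
    (A : set (d.-tuple R * bool)) : \bar R :=
  D0 ((fun p => (gresp T beta p.1 t, p.2)) @^-1` A).

Definition TV (dsp : measure_display) (X : measurableType dsp) (R : realType)
    (P Q : set X -> \bar R) : \bar R :=
  ereal_sup [set (`|P A - Q A|)%E | A in [set A : set X | measurable A]].

From HB Require Import structures.
From mathcomp Require Import all_boot all_order all_algebra.
From mathcomp Require Import all_classical all_reals all_analysis.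
From mathcomp Require Import lra.
Import Order.TTheory GRing.Theory Num.Theory.
Local Open Scope classical_set_scope.
Local Open Scope ring_scope.

(* Fix theta and budgets b1 <= b2.  The responses g_b1(x0, theta)
   and g_b2(x0, theta) coincide unless the score x0.theta falls in the band
   [T - b2, T - b1[: below it nobody moves, above it both move to the same
   point of the decision boundary, and inside [T - b1, T) both move there too.
   Hence for every measurable A the two pushforward probabilities of A differ
   by at most the D0-mass of that band (a general fact about two maps that
   agree off a set E), and the density bound phi_u turns this mass into at
   most phi_u * (b2 - b1).  Taking the supremum over A gives the TV bound.
   The file first proves measurability of the score and of the response map,
   then the agreement-off-the-band lemma, the two measure-theoretic estimates,
   a small extended-real lemma, and finally the theorem. *)

Lemma measure_preimage_le_off (dX dY : measure_display) (X : measurableType dX)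
    (Y : measurableType dY) (R : realType) (mu : {measure set X -> \bar R})
    (g1 g2 : X -> Y) (E : set X) (A : set Y) :
  measurable_fun setT g1 -> measurable_fun setT g2 -> measurable E ->
  (forall x, ~ E x -> g1 x = g2 x) -> measurable A ->
  (mu (g1 @^-1` A) <= mu (g2 @^-1` A) + mu E)%E.
Proof.
move=> mg1 mg2 mE g12 mA.
have mpre (g : X -> Y) : measurable_fun setT g -> measurable (g @^-1` A).
  by move=> mg; have := mg measurableT _ mA; rewrite setTI.
apply: le_trans (measureU2 _ (mpre _ mg2) mE).
apply: le_measure; rewrite ?inE; [exact: mpre|exact: measurableU (mpre _ mg2) mE|].
move=> x /= Ax; have [Ex|nEx] := pselect (E x); [by right|left].
by rewrite -g12.
Qed.

Lemma density_itv_le (R : realType) (mu : set R -> \bar R) (f : R -> R)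
    (phi a b : R) :
  measurable_fun setT f -> (forall r, 0 <= f r <= phi) ->
  (forall B, measurable B -> mu B = (\int[lebesgue_measure]_(r in B) (f r)%:E)%E) ->
  a <= b -> (mu [set` `[a, b[] <= (phi * (b - a))%:E)%E.
Proof.
move=> mf fb hmu ab.
have phi_ge0 : 0 <= phi by case/andP: (fb 0); apply: le_trans.
rewrite hmu; last exact: measurable_itv.
apply: (@le_trans _ _ (\int[lebesgue_measure]_(r in [set` `[a, b[]) phi%:E)%E).
  apply: ge0_le_integral => //.
  - by move=> x _; rewrite lee_fin; case/andP: (fb x).
  - by apply/measurable_realfun.measurable_EFinP; exact: measurable_funS mf.
  - by move=> x _; rewrite lee_fin; case/andP: (fb x).
rewrite integral_cst /=; last exact: measurable_itv.
rewrite (lebesgue_measure_itv `[a, b[) /= lte_fin; case: ltrP => _.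
  by rewrite -EFinB -EFinM.
by rewrite mule0 lee_fin mulr_ge0 // subr_ge0.
Qed.

Lemma abse_sub_le (R : realType) (a b c : \bar R) :
  a \is a fin_num -> b \is a fin_num ->
  (a <= b + c -> b <= a + c -> `|a - b| <= c)%E.
Proof.
case: a => [a||] //; case: b => [b||] //; case: c => [c||] //= _ _.
- by rewrite -!EFinD !lee_fin => h1 h2; rewrite ler_norml; apply/andP; split; lra.
- by move=> _ _; rewrite leey.
Qed.

Section StrategicResponse.
Variables (R : realType) (d : nat) (t : d.-tuple R).
Local Notation X := (d.-tuple R * bool)%type.

Lemma measurable_score : measurable_fun [set: X] (fun p : X => dotp p.1 t).
Proof.
apply: measurable_sum => i.
apply: measurable_realfun.measurable_funM => //.
exact: measurableT_comp (measurable_tnth i) measurable_fst.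
Qed.

Lemma measurable_response (T b : R) :
  measurable_fun [set: X] (fun p : X => (gresp T b p.1 t, p.2)).
Proof.
apply: measurable_fun_pair => //.
rewrite /gresp; apply: measurable_fun_ifT.
- apply: measurable_and.
  + by apply: measurable_realfun.measurable_fun_ler => //; exact: measurable_score.
  + by apply: measurable_realfun.measurable_fun_ltr => //; exact: measurable_score.
- apply/measurable_fun_tnthP => i /=; rewrite /comp.
  under eq_fun do rewrite tnth_mktuple.
  apply: measurable_realfun.measurable_funD.
  + exact: measurableT_comp (measurable_tnth i) measurable_fst.
  + apply: measurable_realfun.measurable_funM => //.
    by apply: measurable_realfun.measurable_funB => //; exact: measurable_score.
- exact: measurable_fst.
Qed.

(* The examples whose response differs between budgets b1 <= b2. *)
Definition band (T b1 b2 : R) : set X :=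
  [set p | [set` `[T - b2, T - b1[] (dotp p.1 t)].

Lemma measurable_band (T b1 b2 : R) : measurable (band T b1 b2).
Proof.
have := measurable_score measurableT _ (measurable_itv `[T - b2, T - b1[).
by rewrite setTI.
Qed.

Lemma gresp_off_band (T b1 b2 : R) (x : d.-tuple R) : b1 <= b2 ->
  ~ [set` `[T - b2, T - b1[] (dotp x t) -> gresp T b1 x t = gresp T b2 x t.
Proof.
rewrite /gresp /= in_itv /=; set z := dotp x t => b12 nband.
case h1: (T - b1 <= z); case h2: (T - b2 <= z); case h3: (z < T) => //=;
  exfalso; apply: nband; move: h1 h2 h3; rewrite ?ler_eqVlt; lra.
Qed.

Lemma Dbeta_close (T phi b1 b2 : R) (D0 : probability X R) (f : R -> R)
    (A : set X) :
  measurable_fun setT f -> (forall r, 0 <= f r <= phi) ->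
  (forall B, measurable B ->
     D0 [set p | B (dotp p.1 t)] = (\int[lebesgue_measure]_(r in B) (f r)%:E)%E) ->
  b1 <= b2 -> measurable A ->
  (Dbeta D0 T b1 t A <= Dbeta D0 T b2 t A + (phi * (b2 - b1))%:E)%E /\
  (Dbeta D0 T b2 t A <= Dbeta D0 T b1 t A + (phi * (b2 - b1))%:E)%E.
Proof.
move=> mf fb hD b12 mA.
have band_le : (D0 (band T b1 b2) <= (phi * (b2 - b1))%:E)%E.
  have := @density_itv_le R (fun B => D0 [set p | B (dotp p.1 t)]) f phi
    (T - b2) (T - b1) mf fb hD (lerB (lexx T) b12).
  by have -> : T - b1 - (T - b2) = b2 - b1 by lra.
have off x : ~ band T b1 b2 x -> gresp T b1 x.1 t = gresp T b2 x.1 t.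
  exact: gresp_off_band.
split; apply: (le_trans _ (leeD2l _ band_le)); apply: measure_preimage_le_off mA;
  by [exact: measurable_response|exact: measurable_band|move=> x /off ->].
Qed.

Lemma Dbeta_diff_le (T phi b1 b2 : R) (D0 : probability X R) (f : R -> R)
    (A : set X) :
  measurable_fun setT f -> (forall r, 0 <= f r <= phi) ->
  (forall B, measurable B ->
     D0 [set p | B (dotp p.1 t)] = (\int[lebesgue_measure]_(r in B) (f r)%:E)%E) ->
  measurable A ->
  (`|Dbeta D0 T b1 t A - Dbeta D0 T b2 t A| <= (phi * `|b1 - b2|)%:E)%E.
Proof.
move=> mf fb hD mA.
have fin b : Dbeta D0 T b t A \is a fin_num.
  by apply: fin_num_measure; have := measurable_response T b measurableT _ mA;
    rewrite setTI.
have [b12|b21] := lerP b1 b2.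
- have [close12 close21] := Dbeta_close T _ _ _ D0 f A mf fb hD b12 mA.
  exact: abse_sub_le (fin b1) (fin b2) close12 close21.
- have [close21 close12] := Dbeta_close T _ _ _ D0 f A mf fb hD (ltW b21) mA.
  exact: abse_sub_le (fin b1) (fin b2) close12 close21.
Qed.

End StrategicResponse.

Theorem claim3 (R : realType) (d : nat) (Theta : set (d.-tuple R))
    (T phi_u : R) (D0 : probability (d.-tuple R * bool)%type R) :
  (forall t, Theta t -> unit_vec t) ->
  (forall t, Theta t ->
     exists f : R -> R,
       measurable_fun setT f /\
       (forall r, 0 <= f r <= phi_u) /\
       (forall B : set R, measurable B ->
          D0 [set p | B (dotp p.1 t)] =
          (\int[lebesgue_measure]_(r in B) (f r)%:E)%E)) ->
  forall beta beta' : R, 0 < beta -> 0 < beta' ->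
  forall t, Theta t ->
    (TV (Dbeta D0 T beta t) (Dbeta D0 T beta' t)
     <= (phi_u * `|beta - beta'|)%:E)%E.
Proof.
move=> _ hdens beta beta' _ _ t Tt.
have [f [mf [fb hD]]] := hdens t Tt.
apply: ge_ereal_sup => _ [A mA <-].
exact: Dbeta_diff_le mf fb hD mA.
Qed.
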